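(* Any parallel MTTKRP algorithm on $P$ processors, each with local memory of size $M$, in which the $IR$ $N$-ary multiplies are distributed among the processors, involves some processor performing at least \[ \frac{1}{3^{2-1/N}}\,\frac{N I R}{P\,M^{1-1/N}} - M \] sends and receives.
   Context: MTTKRP: Fix integers $N\ge 2$, $I_1,\dots,I_N\ge1$, $R\ge1$, and a mode $n\in[N]$; let $I=I_1I_2\cdots I_N$. Inputs are an $N$-way tensor $\mathcal{X}$ of dimensions $I_1\times\cdots\times I_N$ and matrices $A^{(k)}$ of size $I_k\times R$ for $k\in[N]\setminus\{n\}$; the output is the $I_n\times R$ matrix $B^{(n)}$ with $B^{(n)}(i_n,r)=\sum \mathcal{X}(i_1,\dots,i_N)\prod_{k\ne n}A^{(k)}(i_k,r)$, the sum over all $(i_1,\dots,i_N)$ with $n$-th entry $i_n$; values come from an arbitrary set with two binary operations (no algebraic laws assumed). Each point of the iteration space $[I_1]\times\cdots\times[I_N]\times[R]$ corresponds to one atomic $N$-ary multiply, which must be performed by some processor, and the products are accumulated by binary additions. Parallel model: $P$ processors, each with a local memory holding at most $M$ values, connected by a network; a processor operates only on values in its local memory; communication consists of sends and receives of individual values. *)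

From Stdlib Require Import Arith List Permutation Reals.
Import ListNotations.

(* dims = [I_1; ...; I_N] (0-based positions 0..N-1); the mode n is 0-based. *)

Fixpoint idx_tuples (ds : list nat) : list (list nat) :=
  match ds with
  | [] => [[]]
  | d :: ds' => flat_map (fun j => map (cons j) (idx_tuples ds')) (seq 0 d)
  end.

Definition valid_idx (dims : list nat) (i : list nat) : Prop :=
  length i = length dims /\ forall k, k < length dims -> nth k i 0 < nth k dims 0.

(* ---------- Values: free term algebra (no algebraic laws assumed) ---------- *)
Inductive term : Type :=
  | TX   (i : list nat)              (* tensor entry X(i_1,...,i_N) *)
  | TA   (k j r : nat)               (* factor entry A^(k)(j, r) *)
  | TMul (args : list term)          (* N-ary multiply *)
  | TAdd (a b : term).

Definition is_input (N : nat) (dims : list nat) (R n : nat) (t : term) : Prop :=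
  (exists i, t = TX i /\ valid_idx dims i) \/
  (exists k j r, t = TA k j r /\ k < N /\ k <> n /\ j < nth k dims 0 /\ r < R).

(* operands of the multiply at point (i, r): X(i), then A^(k)(i_k, r) for k <> n, increasing k *)
Definition mul_args (N n : nat) (i : list nat) (r : nat) : list term :=
  TX i :: map (fun k => TA k (nth k i 0) r) (filter (fun k => negb (k =? n)) (seq 0 N)).

Definition prod_term (N n : nat) (i : list nat) (r : nat) : term :=
  TMul (mul_args N n i r).

(* the products contributing to B(iN, r) *)
Definition products_for (N : nat) (dims : list nat) (n iN r : nat) : list term :=
  map (fun i => prod_term N n i r)
      (filter (fun i => nth n i 0 =? iN) (idx_tuples dims)).

Inductive sum_tree : term -> list term -> Prop :=
  | sum_leaf t : sum_tree t [t]
  | sum_node a b la lb : sum_tree a la -> sum_tree b lb -> sum_tree (TAdd a b) (la ++ lb).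

(* processors are 0..P-1; a state gives each processor's local memory (a list of values) *)
Definition state := nat -> list term.

Definition upd (s : state) (p : nat) (l : list term) : state :=
  fun q => if q =? p then l else s q.

Definition bounded (P M : nat) (s : state) : Prop :=
  forall p, p < P -> length (s p) <= M.

Inductive event : Type :=
  | ETransfer (src dst : nat) (t : term)   (* src sends one value t, dst receives it *)
  | EMul (p : nat) (args : list term)
  | EAdd (p : nat) (a b : term)
  | EDel (p : nat) (t : term).             (* p discards one copy of t *)

Inductive step (N P M : nat) : state -> event -> state -> Prop :=
  | st_transfer s src dst t :
      src < P -> dst < P -> src <> dst -> In t (s src) ->
      bounded P M (upd s dst (t :: s dst)) ->
      step N P M s (ETransfer src dst t) (upd s dst (t :: s dst))
  | st_mul s p args :
      p < P -> length args = N -> (forall a, In a args -> In a (s p)) ->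
      bounded P M (upd s p (TMul args :: s p)) ->
      step N P M s (EMul p args) (upd s p (TMul args :: s p))
  | st_add s p a b :
      p < P -> In a (s p) -> In b (s p) ->
      bounded P M (upd s p (TAdd a b :: s p)) ->
      step N P M s (EAdd p a b) (upd s p (TAdd a b :: s p))
  | st_del s p t l1 l2 :
      p < P -> s p = l1 ++ t :: l2 ->
      step N P M s (EDel p t) (upd s p (l1 ++ l2)).

Inductive run (N P M : nat) : state -> list event -> state -> Prop :=
  | run_nil s : run N P M s [] s
  | run_cons s e s' es s'' :
      step N P M s e s' -> run N P M s' es s'' -> run N P M s (e :: es) s''.

Definition comm (p : nat) (es : list event) : nat :=
  length (filter (fun e => match e with
                           | ETransfer a b _ => orb (a =? p) (b =? p)
                           | _ => false
                           end) es).

Definition mttkrp_execution (N : nat) (dims : list nat) (R n P M : nat)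
    (s0 : state) (es : list event) (sf : state) : Prop :=
  bounded P M s0 /\
  (forall p t, p < P -> In t (s0 p) -> is_input N dims R n t) /\
  (* the execution is legal (local operations only on local values, memory <= M throughout) *)
  run N P M s0 es sf /\
  (forall i r, In i (idx_tuples dims) -> r < R ->
     exists j q, nth_error es j = Some (EMul q (mul_args N n i r)) /\
       forall j' q', nth_error es j' = Some (EMul q' (mul_args N n i r)) -> j' = j) /\
  (* at the end, every output entry B(iN, r) is held by some processor, as a sum
     (by binary additions, in any order/bracketing) of exactly its products *)
  (forall iN r, iN < nth n dims 0 -> r < R ->
     exists p t ls, p < P /\ In t (sf p) /\ sum_tree t ls /\
       Permutation ls (products_for N dims n iN r)).

(* Cut the trace of each processor into segments in which it sends or receives [M] values
   (the last segment possibly fewer). During a segment a processor can use at most [3M]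
   distinct tensor, factor and output entries: inputs must be held at the start (at most [M])
   or received, and a partial sum of an output [B(j, r)] started in the segment must be held
   at the end (at most [M]) or sent, because before its multiply no processor holds the
   product while at the end the output sum does. A discrete Loomis-Whitney argument (per rank
   index, the number of points is bounded by the product of the coordinate projections, then
   AM-GM) shows that a set of points with [X] tensor entries and [Z] factor and output
   entries has at most [X ^ (1 - 1/N) * Z / N] elements, so a segment holds at most
   [(3M) ^ (2 - 1/N) / N] multiplies. The processor performing at least [I R / P] multiplies
   therefore needs enough segments to give the bound. *)

From Stdlib Require Import List Reals Lra Lia Permutation ClassicalDescription.
(* Imported after [Reals], whose [bounded] it must shadow. *)
Import ListNotations.
From mathcomp Require Import ssreflect.
From mathcomp Require ssrfun ssrbool eqtype ssrnat seq zify.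

Set Implicit Arguments.
Unset Strict Implicit.

Section RealInequalities.
Local Open Scope R_scope.

Definition prodR (l : list R) : R := fold_right Rmult 1 l.
Definition sumR (l : list R) : R := fold_right Rplus 0 l.

Lemma Rpower_gt0 x y : 0 < Rpower x y.
Proof. exact: exp_pos. Qed.

(* The tangent at [A] to the graph of [x ^ S m] lies below the graph. *)
Lemma pow_tangent_le (A B : R) (m : nat) : 0 <= A -> 0 <= B ->
  A ^ m * (INR (S m) * B - INR m * A) <= B ^ S m.
Proof.
move=> A0 B0; elim: m => [|m IH]; first by rewrite /=; lra.
have Am0 : 0 <= A ^ m by apply: pow_le.
have m0 := pos_INR m.
have Hsq : 0 <= (INR m + 1) * A ^ m * ((B - A) * (B - A)).
  apply: Rmult_le_pos; last exact: Rle_0_sqr.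
  by apply: Rmult_le_pos; lra.
rewrite !S_INR in IH *.
have : 0 <= B * (B ^ S m - A ^ m * ((INR m + 1) * B - INR m * A)) by apply: Rmult_le_pos; lra.
rewrite /=; nra.
Qed.

Lemma AM_GM (xs : list R) : Forall (Rle 0) xs ->
  prodR xs * INR (length xs) ^ length xs <= sumR xs ^ length xs.
Proof.
elim=> [|x l x0 l0 IH] /=; first lra.
case: (Nat.eq_dec (length l) 0) => [/length_zero_iff_nil -> /= | m_neq0]; first lra.
set m := length l in IH m_neq0 *; set p := prodR l in IH *; set s := sumR l in IH *.
have p0 : 0 <= p.
  by rewrite /p; elim: l0 {IH} => [|y ys y0 _ ?] /=; [lra | apply: Rmult_le_pos].
have s0 : 0 <= s by rewrite /s; elim: l0 {IH} => [|y ys y0 _ ?] /=; lra.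
have mpos : 0 < INR m by apply: lt_0_INR; lia.
have Sm0 : 0 < INR (S m) by apply: lt_0_INR; lia.
(* The tangent bound at the mean [A] of [l], evaluated at the mean [B] of [x :: l], gives
   [x * A ^ m <= B ^ S m]; the induction hypothesis is [p <= A ^ m]. *)
set A := s / INR m; set B := (x + s) / INR (S m).
have A0 : 0 <= A by apply: Rle_mult_inv_pos.
have B0 : 0 <= B by apply: Rle_mult_inv_pos; lra.
change (x * p * INR (S m) ^ S m <= (x + s) ^ S m).
have := @pow_tangent_le A B m A0 B0.
have -> : INR (S m) * B - INR m * A = x by rewrite /A /B; field; lra.
have Es : s ^ m = A ^ m * INR m ^ m by rewrite -Rpow_mult_distr /A; f_equal; field; lra.
have EB : (x + s) ^ S m = B ^ S m * INR (S m) ^ S m.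
  by rewrite -Rpow_mult_distr /B; f_equal; field; lra.
have pA : p <= A ^ m.
  have : 0 < INR m ^ m by apply: pow_lt.
  nra.
have : 0 <= INR (S m) ^ S m by apply: pow_le; lra.
have : x * p <= x * A ^ m by apply: Rmult_le_compat_l.
rewrite EB; nra.
Qed.

Lemma prodR_map_INR (c : list nat) : prodR (map INR c) = INR (fold_right Nat.mul 1%nat c).
Proof. by elim: c => //= a c ->; rewrite mult_INR. Qed.

Lemma sumR_map_INR (c : list nat) : sumR (map INR c) = INR (fold_right Nat.add 0%nat c).
Proof. by elim: c => //= a c ->; rewrite plus_INR. Qed.

Lemma geometric_mean_le (c : list nat) : c <> nil -> (0 < fold_right Nat.mul 1%nat c)%nat ->
  Rpower (INR (fold_right Nat.mul 1%nat c)) (/ INR (length c))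
    <= INR (fold_right Nat.add 0%nat c) / INR (length c).
Proof.
move=> c_nil pc_gt0.
have lc_gt0 : (0 < length c)%nat by destruct c; [done | simpl; lia].
have N_gt0 : 0 < INR (length c) by apply: lt_0_INR.
have := @AM_GM (map INR c).
rewrite prodR_map_INR sumR_map_INR length_map.
set pc := INR (fold_right _ _ _); set sc := INR (fold_right _ _ _); set N := INR (length c).
have pc_ge1 : 1 <= pc by rewrite /pc -/(INR 1); apply: le_INR; lia.
have NN_gt0 : 0 < N ^ length c by apply: pow_lt.
move=> /(_ _) AM; have {}AM : pc * N ^ length c <= sc ^ length c.
  by apply: AM; apply/Forall_forall => _ /in_map_iff [k [<- _]]; apply: pos_INR.
have sc_gt0 : 0 < sc.
  have sc0 := pos_INR (fold_right Nat.add 0%nat c); case: (Rle_lt_or_eq_dec 0 sc) => // sc_eq0.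
  by move: AM; rewrite -sc_eq0 pow_i; [nra | lia].
have mean_gt0 : 0 < sc / N by apply: Rdiv_lt_0_compat.
have pc_le : pc <= (sc / N) ^ length c.
  rewrite /Rdiv Rpow_mult_distr pow_inv.
  apply: (Rmult_le_reg_r (N ^ length c)) => //.
  by rewrite Rmult_assoc Rinv_l; lra.
apply: (Rle_trans _ (Rpower ((sc / N) ^ length c) (/ N))).
  by apply: Rle_Rpower_l; [apply: Rlt_le; apply: Rinv_0_lt_compat | lra].
by rewrite -Rpower_pow // Rpower_mult Rinv_r ?Rpower_1 //; lra.
Qed.

(* [s] is split as [s ^ (1 - 1/N) * s ^ (1/N)], the first factor bounded by [x] and the
   second by the geometric mean of [c]. *)
Lemma card_le_Rpower_mean (s x : nat) (c : list nat) :
  c <> nil -> (s <= x)%nat -> (s <= fold_right Nat.mul 1%nat c)%nat ->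
  INR s <= Rpower (INR x) (1 - / INR (length c)) * INR (fold_right Nat.add 0%nat c)
              / INR (length c).
Proof.
move=> c_nil sx sc.
set N := INR (length c).
have N_ge1 : 1 <= N by rewrite /N -/(INR 1); apply: le_INR; destruct c; [done | simpl; lia].
have invN_le1 : / N <= 1 by rewrite -Rinv_1; apply: Rinv_le_contravar; lra.
have invN_gt0 : 0 < / N by apply: Rinv_0_lt_compat; lra.
case: (Nat.eq_dec s 0) => [-> | s_neq0].
  apply: Rle_mult_inv_pos; last lra.
  by apply: Rmult_le_pos; [apply: Rlt_le; apply: Rpower_gt0 | apply: pos_INR].
have s_gt0 : 0 < INR s by apply: lt_0_INR; lia.
have -> : INR s = Rpower (INR s) (1 - / N) * Rpower (INR s) (/ N).
  by rewrite -Rpower_plus (_ : 1 - / N + / N = 1) ?Rpower_1 //; ring.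
rewrite /Rdiv Rmult_assoc; apply: Rmult_le_compat.
- by apply: Rlt_le; apply: Rpower_gt0.
- by apply: Rlt_le; apply: Rpower_gt0.
- by apply: Rle_Rpower_l; [lra | split; last apply: le_INR].
apply: (Rle_trans _ (Rpower (INR (fold_right Nat.mul 1%nat c)) (/ N))).
  by apply: Rle_Rpower_l; [lra | split; last apply: le_INR].
by apply: geometric_mean_le => //; lia.
Qed.

Lemma Rpower_mean_monotone (x z c N : nat) :
  (0 < x)%nat -> (x <= c)%nat -> (z <= c)%nat -> (0 < N)%nat ->
  Rpower (INR x) (1 - / INR N) * INR z / INR N <= Rpower (INR c) (1 - / INR N) * INR c / INR N.
Proof.
move=> x_gt0 xc zc N_gt0.
have N_ge1 : 1 <= INR N by apply: (le_INR 1); lia.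
apply: Rmult_le_compat_r; first by apply: Rlt_le; apply: Rinv_0_lt_compat; lra.
apply: Rmult_le_compat; [apply: Rlt_le; apply: Rpower_gt0 | apply: pos_INR | | exact: le_INR].
apply: Rle_Rpower_l; last by split; [apply: lt_0_INR | apply: le_INR].
have : / INR N <= 1 by rewrite -Rinv_1; apply: Rinv_le_contravar; lra.
lra.
Qed.

Lemma comm_lower_bound_arith (C W T P M N : R) :
  0 < P -> 0 < M -> 0 < N -> T <= P * W ->
  W <= (C / M + 1) * (Rpower (3 * M) (1 - / N) * (3 * M) / N) ->
  C >= / Rpower 3 (2 - / N) * (N * T) / (P * Rpower M (1 - / N)) - M.
Proof.
move=> P_gt0 M_gt0 N_gt0 TW.
rewrite -Rpower_mult_distr; try lra.
have -> : Rpower 3 (2 - / N) = 3 * Rpower 3 (1 - / N).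
  by rewrite (_ : 2 - / N = 1 + (1 - / N)); [rewrite Rpower_plus Rpower_1 //; lra | ring].
set x := Rpower 3 _; set y := Rpower M _.
have x_gt0 : 0 < x by apply: Rpower_gt0.
have y_gt0 : 0 < y by apply: Rpower_gt0.
have -> : (C / M + 1) * (x * y * (3 * M) / N) = (C + M) * (3 * x * y) / N by field; lra.
move=> WC; apply: Rle_ge.
have NT : N * T <= (C + M) * (3 * x * y * P).
  apply: (Rle_trans _ (N * (P * W))); first by apply: Rmult_le_compat_l; lra.
  have -> : (C + M) * (3 * x * y * P) = N * (P * ((C + M) * (3 * x * y) / N)) by field; lra.
  apply: Rmult_le_compat_l; first lra.
  by apply: Rmult_le_compat_l; lra.
have -> : / (3 * x) * (N * T) / (P * y) = N * T / (3 * x * y * P) by field; lra.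
have : 0 < 3 * x * y * P by repeat apply: Rmult_lt_0_compat; lra.
move=> D_gt0; apply: (Rplus_le_reg_r M); rewrite Rplus_comm Rplus_minus.
apply: (Rmult_le_reg_r _ _ _ D_gt0); rewrite /Rdiv Rmult_assoc Rinv_l; lra.
Qed.

End RealInequalities.

Inductive subterm : term -> term -> Prop :=
  | subterm_refl t : subterm t t
  | subterm_addl t a b : subterm t a -> subterm t (TAdd a b)
  | subterm_addr t a b : subterm t b -> subterm t (TAdd a b)
  | subterm_mul t a args : In a args -> subterm t a -> subterm t (TMul args).

Lemma subterm_trans x y z : subterm x y -> subterm y z -> subterm x z.
Proof. by move=> xy yz; elim: yz xy => // *; econstructor; eauto. Qed.

Definition atomic (u : term) : Prop :=
  match u with TX _ | TA _ _ _ => True | _ => False end.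

Lemma atomic_subterm x u : subterm x u -> atomic u -> x = u.
Proof. by case. Qed.

Definition product_of_atoms (u : term) : Prop :=
  exists args, u = TMul args /\ forall a, In a args -> atomic a.

Lemma prod_term_of_atoms N n i r : product_of_atoms (prod_term N n i r).
Proof. by exists (mul_args N n i r); split=> // a /= [<- | /in_map_iff [k [<- _]]]. Qed.

(* A partial sum of the products of [B(j, r)] is recognised by its leftmost product; the
   key [(n, j, r)] names the mode-[n] coordinate of the corresponding iteration points. *)
Fixpoint output_key (n : nat) (u : term) : option (nat * nat * nat) :=
  match u with
  | TAdd a _ => output_key n a
  | TMul (TX i :: TA _ _ r :: _) => Some (n, nth n i 0, r)
  | _ => None
  end.

Lemma output_key_prod_term N n i r :
  2 <= N -> output_key n (prod_term N n i r) = Some (n, nth n i 0, r).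
Proof.
move=> N2; rewrite /prod_term /mul_args.
have [k [ks ->]] : exists k ks, filter (fun k => negb (k =? n)) (seq 0 N) = k :: ks.
  by case: N N2 => [|[|N]] N2 /=; [lia | lia | case: n => [|n] /=; do 2 eexists].
by [].
Qed.

Lemma sum_tree_subterm t ls l : sum_tree t ls -> In l ls -> subterm l t.
Proof.
elim=> [t' | a b la lb _ IHa _ IHb] Hl.
- by case: Hl => [<- | []]; apply: subterm_refl.
- case: (in_app_or _ _ _ Hl) => ?; [apply: subterm_addl | apply: subterm_addr]; auto.
Qed.

Lemma sum_tree_output_key n t ls K :
  sum_tree t ls -> (forall l, In l ls -> product_of_atoms l /\ output_key n l = K) ->
  forall u, subterm u t -> atomic u \/ output_key n u = K.
Proof.
elim=> [l | a b la lb Ha IHa Hb IHb] Hls u Hu.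
  have [[args [El Hargs]] Kl] := Hls l (or_introl eq_refl); subst l.
  inversion Hu as [| | | ? a ? Ha Hsub]; subst; first by right.
  by left; rewrite (atomic_subterm Hsub (Hargs _ Ha)); apply: Hargs.
have Hla l : In l la -> product_of_atoms l /\ output_key n l = K.
  by move=> Hl; apply: Hls; apply: in_or_app; left.
have Hlb l : In l lb -> product_of_atoms l /\ output_key n l = K.
  by move=> Hl; apply: Hls; apply: in_or_app; right.
inversion Hu; subst; [right | exact: IHa | exact: IHb].
case: (IHa Hla a (subterm_refl a)) => // a_atomic.
by case: Ha Hla a_atomic => [l | *] //= /(_ l (or_introl eq_refl)) [[args [-> _]]].
Qed.

(* [Q] can only arise from [Q]-values, except by performing the multiply [args0]. *)
Definition backward_closed (args0 : list term) (Q : term -> Prop) : Prop :=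
  (forall a b, Q (TAdd a b) -> Q a \/ Q b) /\
  (forall args, Q (TMul args) -> args = args0 \/ exists a, In a args /\ Q a).

Lemma subterm_backward_closed args0 : backward_closed args0 (subterm (TMul args0)).
Proof. by split=> [a b | args] H; inversion H; subst; eauto. Qed.

Lemma subterm_between_backward_closed args0 t :
  backward_closed args0 (fun u => subterm (TMul args0) u /\ subterm u t).
Proof.
have [QA QM] := subterm_backward_closed args0.
split=> [a b [/QA Hab Ht] | args [/QM Hargs Ht]].
- case: Hab => [Ha | Hb]; [left | right]; split=> //; apply: (subterm_trans _ Ht).
  + by apply: subterm_addl; apply: subterm_refl.
  + by apply: subterm_addr; apply: subterm_refl.
- case: Hargs => [-> | [a [Ha Hpa]]]; [by left | right].
  exists a; split=> //; split=> //; apply: (subterm_trans _ Ht).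
  exact: subterm_mul Ha (subterm_refl a).
Qed.

Definition received (q : nat) (L : list event) : list term :=
  flat_map (fun e => if e is ETransfer _ b t then if b =? q then [t] else [] else []) L.

Definition sent (q : nat) (L : list event) : list term :=
  flat_map (fun e => if e is ETransfer a _ t then if a =? q then [t] else [] else []) L.

Lemma comm_app q A B : comm q (A ++ B) = comm q A + comm q B.
Proof. by rewrite /comm filter_app length_app. Qed.

Lemma received_sent_le_comm q L :
  (forall a b t, In (ETransfer a b t) L -> a <> b) ->
  length (received q L) + length (sent q L) <= comm q L.
Proof.
rewrite /comm; elim: L => [|e L IH] //= HL.
have {}IH := IH (fun a b t Ht => HL a b t (or_intror Ht)).
rewrite !length_app; case: e HL => [a b t | p args | p a b | p t] HL //=.
have := HL a b t (or_introl eq_refl).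
by case: (Nat.eqb_spec b q); case: (Nat.eqb_spec a q) => /=; lia.
Qed.

Definition involves (q : nat) (e : event) : bool :=
  match e with ETransfer a b _ => orb (a =? q) (b =? q) | _ => false end.

Lemma comm_cons q e L : comm q (e :: L) = (if involves q e then 1 else 0) + comm q L.
Proof. by rewrite /comm /=; case: e => //= a b t; case: (orb _ _). Qed.

Lemma split_at_comm q b (L : list event) : exists ch rest,
  L = ch ++ rest /\ comm q ch <= b /\ (rest = [] \/ comm q ch = b).
Proof.
elim: L b => [|e L IH] b; first by exists [], []; split=> //; split; [apply: Nat.le_0_l | left].
case Ee : (involves q e).
- case: b => [|b]; first by exists [], (e :: L); split=> //; split; [apply: Nat.le_0_l | right].
  have [ch [rest [EL [Hb Hr]]]] := IH b.
  exists (e :: ch), rest; rewrite EL comm_cons Ee; split=> //; split; first lia.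
  by case: Hr; [left | right; lia].
- have [ch [rest [EL [Hb Hr]]]] := IH b.
  by exists (e :: ch), rest; rewrite EL comm_cons Ee.
Qed.

Lemma received_in q L src u : In (ETransfer src q u) L -> In u (received q L).
Proof.
by move=> H; apply/in_flat_map; exists (ETransfer src q u); rewrite Nat.eqb_refl /=; auto.
Qed.

Lemma sent_in q L dst u : In (ETransfer q dst u) L -> In u (sent q L).
Proof.
by move=> H; apply/in_flat_map; exists (ETransfer q dst u); rewrite Nat.eqb_refl /=; auto.
Qed.

Lemma upd_eq s p l : upd s p l p = l.
Proof. by rewrite /upd Nat.eqb_refl. Qed.

Lemma upd_neq s p l q : q <> p -> upd s p l q = s q.
Proof. by rewrite /upd => /Nat.eqb_neq ->. Qed.

Lemma in_upd_cons s p x q u :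
  In u (upd s p (x :: s p) q) -> (q = p /\ u = x) \/ In u (s q).
Proof.
case: (Nat.eq_dec q p) => [-> | ne]; last by rewrite upd_neq //; right.
by rewrite upd_eq => -[<- | ]; [left | right].
Qed.

Lemma in_upd_del {s p t l1 l2 q u} :
  s p = l1 ++ t :: l2 -> In u (upd s p (l1 ++ l2) q) -> In u (s q).
Proof.
move=> Esp; case: (Nat.eq_dec q p) => [-> | ne]; last by rewrite upd_neq.
rewrite upd_eq Esp => Hu; apply/in_or_app; have := in_app_or _ _ _ Hu; rewrite /=; tauto.
Qed.

Section Runs.
Variables N P M : nat.

Lemma run_app_inv {s A B s'} :
  run N P M s (A ++ B) s' -> exists m, run N P M s A m /\ run N P M m B s'.
Proof.
elim: A s => [|e A IH] s /=; first by exists s; split; [constructor |].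
move=> H; inversion H as [|? ? s1 ? ? Hst Hrun]; subst.
have [m [HA HB]] := IH _ Hrun.
by exists m; split; [econstructor; eauto |].
Qed.

Lemma run_app s A m B s' :
  run N P M s A m -> run N P M m B s' -> run N P M s (A ++ B) s'.
Proof. by elim=> //= *; econstructor; eauto. Qed.

Lemma run_cons_inv s e L s' :
  run N P M s (e :: L) s' -> exists m, step N P M s e m /\ run N P M m L s'.
Proof. by move=> H; inversion H; subst; eauto. Qed.

Definition event_in_range (e : event) : Prop :=
  match e with
  | ETransfer a b _ => a < P /\ b < P /\ a <> b
  | EMul p _ | EAdd p _ _ | EDel p _ => p < P
  end.

Lemma run_event_in_range {s L s' e} :
  run N P M s L s' -> In e L -> event_in_range e.
Proof.
elim=> //= {}s e' s1 {}L {}s' Hst _ IH [<- | ]; last exact: IH.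
by case: Hst.
Qed.

Lemma run_bounded s L s' : run N P M s L s' -> bounded P M s -> bounded P M s'.
Proof.
elim=> // {}s e s1 {}L {}s' Hst _ IH Hs; apply: IH.
case: Hst Hs => //= {}s p t l1 l2 Hp Esp Hs q Hq.
case: (Nat.eq_dec q p) => [-> | ne]; last by rewrite upd_neq //; apply: Hs.
by have := Hs p Hp; rewrite upd_eq Esp !length_app /=; lia.
Qed.

Definition held_elsewhere (q : nat) (Q : term -> Prop) (s : state) : Prop :=
  exists q' u, q' < P /\ q' <> q /\ In u (s q') /\ Q u.

Lemma step_held_elsewhere args0 Q q s e s' :
  backward_closed args0 Q -> step N P M s e s' -> (forall p, e <> EMul p args0) ->
  held_elsewhere q Q s' ->
  held_elsewhere q Q s \/ exists dst u, e = ETransfer q dst u /\ Q u.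
Proof.
move=> [QA QM] Hst Hne [q' [u [Hq' [ne [Hu Qu]]]]].
case: Hst Hne Hu => {}s.
- move=> src dst t Hsrc _ _ Ht _ _ /in_upd_cons [[_ Eu] | Hu]; last by left; exists q', u.
  subst t; case: (Nat.eq_dec src q) => [-> | ne']; first by right; exists dst, u.
  by left; exists src, u.
- move=> p args Hp _ Hargs _ Hne /in_upd_cons [[Eq Eu] | Hu]; last by left; exists q', u.
  subst q' u.
  case: (QM _ Qu) => [Eargs | [a [Ha Qa]]]; first by case: (Hne p); rewrite Eargs.
  by left; exists p, a; repeat split; auto.
- move=> p a b Hp Ha Hb _ _ /in_upd_cons [[Eq Eu] | Hu]; last by left; exists q', u.
  subst q' u.
  by left; case: (QA _ _ Qu) => ?; [exists p, a | exists p, b].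
- by move=> p t l1 l2 _ Esp _ /(in_upd_del Esp) Hu; left; exists q', u.
Qed.

Lemma run_held_elsewhere args0 Q q s L s' :
  backward_closed args0 Q -> run N P M s L s' -> (forall p, ~ In (EMul p args0) L) ->
  held_elsewhere q Q s' ->
  held_elsewhere q Q s \/ exists dst u, In (ETransfer q dst u) L /\ Q u.
Proof.
move=> HQ; elim=> [{}s _ | {}s e s1 {}L {}s' Hst _ IH HL]; first by left.
have HL' : forall p, ~ In (EMul p args0) L by move=> p Hp; apply: (HL p); right.
move/(IH HL') => [| [dst [u [Hin Qu]]]]; last by right; exists dst, u; split; [right |].
have He : forall p, e <> EMul p args0 by move=> p Ep; apply: (HL p); left.
move/(step_held_elsewhere HQ Hst He) => [| [dst [u [-> Qu]]]]; first by left.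
by right; exists dst, u; split; [left |].
Qed.

Lemma run_atomic_origin {s L s' q u} :
  run N P M s L s' -> atomic u -> In u (s' q) ->
  In u (s q) \/ exists src, In (ETransfer src q u) L.
Proof.
move=> Hrun Hu; elim: Hrun => {s L s'} [s | s e s1 L s' Hst _ IH]; first by left.
move/IH => [|[src Hsrc]]; last by right; exists src; right.
case: Hst => {}s.
- move=> src dst t _ _ _ _ _ /in_upd_cons [[-> ->] | ]; [right; exists src; left | left] => //.
- by move=> p args _ _ _ _ /in_upd_cons [[_ Eu] | ]; [rewrite Eu in Hu | left].
- by move=> p a b _ _ _ _ /in_upd_cons [[_ Eu] | ]; [rewrite Eu in Hu | left].
- by move=> p t l1 l2 _ Esp /(in_upd_del Esp); left.
Qed.

End Runs.

Lemma run_mul_operands N P M s L s' q args :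
  run N P M s L s' -> In (EMul q args) L ->
  forall a, In a args -> atomic a -> In a (s q ++ received q L).
Proof.
move=> Hrun HL a Ha a_atomic; have [L1 [L2 EL]] := in_split _ _ HL; subst L.
have [s1 [Hrun1 /run_cons_inv [s2 [Hst _]]]] := run_app_inv Hrun.
have Ha1 : In a (s1 q) by inversion Hst; auto.
apply/in_or_app; case: (run_atomic_origin Hrun1 a_atomic Ha1) => [| [src Hsrc]]; first by left.
right.
by apply: (@received_in _ _ src); apply/in_or_app; left.
Qed.

Lemma run_mul_memory_pos N P M s L s' q args :
  run N P M s L s' -> In (EMul q args) L -> 0 < M.
Proof.
move=> Hrun HL; have [L1 [L2 EL]] := in_split _ _ HL; subst L.
have [s1 [_ /run_cons_inv [s2 [Hst _]]]] := run_app_inv Hrun.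
inversion Hst as [| ? ? ? Hq _ _ Hbd | |]; subst.
by have := Hbd q Hq; rewrite upd_eq /=; lia.
Qed.

Lemma length_idx_tuples ds : length (idx_tuples ds) = fold_right Nat.mul 1 ds.
Proof.
elim: ds => //= d ds IH.
by rewrite (flat_map_constant_length (c := length (idx_tuples ds))) ?length_seq ?IH //
  => j _; rewrite length_map.
Qed.

Lemma idx_tuples_length ds i : In i (idx_tuples ds) -> length i = length ds.
Proof.
elim: ds i => [|d ds IH] i /=; first by case=> [<- |].
by move=> /in_flat_map [j [_ /in_map_iff [i' [<- Hi']]]] /=; rewrite (IH _ Hi').
Qed.

Lemma idx_tuples_bound ds i k :
  In i (idx_tuples ds) -> k < length ds -> nth k i 0 < nth k ds 0.
Proof.
elim: ds i k => [|d ds IH] i k /=; first lia.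
move=> /in_flat_map [j [Hj /in_map_iff [i' [<- Hi']]]].
by case: k => [_ | k Hk] /=; [move/in_seq: Hj; lia | apply: IH Hi' _; lia].
Qed.

Lemma NoDup_idx_tuples ds : NoDup (idx_tuples ds).
Proof.
elim: ds => [|d ds IH] /=; first by repeat constructor.
elim: (seq_NoDup d 0) => [|j js Hj _ IHj] /=; first by constructor.
apply: NoDup_app => //; first by apply: NoDup_map_NoDup_ForallPairs => // x y _ _ [].
move=> _ /in_map_iff [x [<- _]] /in_flat_map [j' [Hj' /in_map_iff [y [[Ej _] _]]]].
by rewrite Ej in Hj'.
Qed.

Lemma fold_mul_pos ds : (forall d, In d ds -> 1 <= d) -> 1 <= fold_right Nat.mul 1 ds.
Proof.
elim: ds => //= d ds IH Hds.
have := Hds d (or_introl eq_refl); have := IH (fun d' Hd' => Hds d' (or_intror Hd')); nia.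
Qed.

Lemma unique_position_split {X : Type} (pr : X -> Prop) {L A B : list X} {x : X} {j : nat} :
  pr x -> (forall j' y, nth_error L j' = Some y -> pr y -> j' = j) -> L = A ++ x :: B ->
  forall y, pr y -> ~ In y A /\ ~ In y B.
Proof.
move=> prx Hu EL.
have EA : length A = j by apply: (Hu _ x) => //; rewrite EL nth_error_app2 ?Nat.sub_diag.
move=> y pry; split=> Hy; have [j' Hj'] := In_nth_error _ _ Hy.
- have Hlt : j' < length A by apply/nth_error_Some; rewrite Hj'.
  by have := Hu j' y; rewrite EL nth_error_app1 // => /(_ Hj' pry); lia.
- have := Hu (length A + S j') y; rewrite EL nth_error_app2; last lia.
  by rewrite (_ : length A + S j' - length A = S j') //; [move=> /(_ Hj' pry); lia | lia].
Qed.

Section Execution.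
Variables (N : nat) (dims : list nat) (rank n P M : nat).
Variables (s0 : state) (es : list event) (sf : state).
Hypotheses (HN : 2 <= N) (Hlen : length dims = N) (Hn : n < N).
Hypothesis Hex : mttkrp_execution N dims rank n P M s0 es sf.

Lemma mul_not_repeated i r A q B :
  In i (idx_tuples dims) -> r < rank -> es = A ++ EMul q (mul_args N n i r) :: B ->
  forall p, ~ In (EMul p (mul_args N n i r)) A /\ ~ In (EMul p (mul_args N n i r)) B.
Proof.
move=> Hi Hr Ees p; have [_ [_ [_ [Huniq _]]]] := Hex.
have [j [q0 [_ Hu]]] := Huniq i r Hi Hr.
have Hu' j' e : nth_error es j' = Some e -> (exists p, e = EMul p (mul_args N n i r)) -> j' = j.
  by move=> Hj' [p' Ep']; rewrite Ep' in Hj'; apply: Hu Hj'.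
pose pr e := exists p, e = EMul p (mul_args N n i r).
have prq : pr (EMul q (mul_args N n i r)) by exists q.
have prp : pr (EMul p (mul_args N n i r)) by exists p.
exact: (unique_position_split prq Hu' Ees prp).
Qed.

Lemma mul_performed i r :
  In i (idx_tuples dims) -> r < rank -> exists q, q < P /\ In (EMul q (mul_args N n i r)) es.
Proof.
move=> Hi Hr; have [_ [_ [Hrun [Huniq _]]]] := Hex.
have [j [q [Hj _]]] := Huniq i r Hi Hr.
have Hin := nth_error_In _ _ Hj.
by exists q; split=> //; apply: (run_event_in_range Hrun Hin).
Qed.

(* [held_elsewhere P P Q s]: some processor holds a [Q]-value, as there is no processor [P]. *)
Lemma product_absent_before i r A q B s1 :
  In i (idx_tuples dims) -> r < rank -> es = A ++ EMul q (mul_args N n i r) :: B ->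
  run N P M s0 A s1 -> ~ held_elsewhere P P (subterm (prod_term N n i r)) s1.
Proof.
move=> Hi Hr Ees HA Hheld; have [_ [Hinput _]] := Hex.
have noA p : ~ In (EMul p (mul_args N n i r)) A by case: (mul_not_repeated Hi Hr Ees p).
case: (run_held_elsewhere (subterm_backward_closed _) HA noA Hheld).
- move=> [q' [u [Hq' [_ [Hu Hsub]]]]].
  by case: (Hinput q' u Hq' Hu) => [[i' [Eu _]] | [k [j [r' [Eu _]]]]]; rewrite Eu in Hsub;
    inversion Hsub.
- by move=> [dst [u [Hsend _]]]; have /= := run_event_in_range HA Hsend; lia.
Qed.

Lemma output_sum_tree i r :
  In i (idx_tuples dims) -> r < rank ->
  exists p t ls, p < P /\ In t (sf p) /\ sum_tree t ls /\ In (prod_term N n i r) ls /\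
    forall l, In l ls -> product_of_atoms l /\ output_key n l = Some (n, nth n i 0, r).
Proof.
move=> Hi Hr; have [_ [_ [_ [_ Hout]]]] := Hex.
have Hin : nth n i 0 < nth n dims 0 by apply: idx_tuples_bound; rewrite // Hlen.
have [p [t [ls [Hp [Ht [Hsum Hperm]]]]]] := Hout _ _ Hin Hr.
exists p, t, ls; do 3 (split=> //); split.
  apply: (Permutation_in _ (Permutation_sym Hperm)).
  by apply/in_map/filter_In; rewrite Nat.eqb_refl.
move=> l /(Permutation_in _ Hperm) /in_map_iff [i' [<- /filter_In [_ /Nat.eqb_eq Ei']]].
by split; [apply: prod_term_of_atoms | rewrite output_key_prod_term // Ei'].
Qed.

(* Before the multiply no processor holds a term containing the product, yet at the end the
   output sum does; the terms in between must leave [q] through its final memory or a send. *)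
Lemma segment_output q pre ch post sg sg' i r :
  q < P -> es = pre ++ ch ++ post ->
  run N P M s0 pre sg -> run N P M sg ch sg' -> run N P M sg' post sf ->
  In i (idx_tuples dims) -> r < rank -> In (EMul q (mul_args N n i r)) ch ->
  exists u, In u (sg' q ++ sent q ch) /\ output_key n u = Some (n, nth n i 0, r).
Proof.
move=> Hq Ees Hpre Hch Hpost Hi Hr Hmul.
have [ch1 [ch2 Ech]] := in_split _ _ Hmul; subst ch.
have [s1 [Hch1 /run_cons_inv [s2 [Hst Hch2]]]] := run_app_inv Hch.
have Es2 : s2 = upd s1 q (prod_term N n i r :: s1 q) by inversion Hst.
have Ees' : es = (pre ++ ch1) ++ EMul q (mul_args N n i r) :: ch2 ++ post.
  by rewrite Ees -!app_assoc.
have no_after p : ~ In (EMul p (mul_args N n i r)) (ch2 ++ post).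
  by case: (mul_not_repeated Hi Hr Ees' p).
have absent := product_absent_before Hi Hr Ees' (run_app Hpre Hch1).
have [p' [t [ls [Hp' [Ht [Hsum [Hleaf Hkeys]]]]]]] := output_sum_tree Hi Hr.
pose Q u := subterm (prod_term N n i r) u /\ subterm u t.
have HQ : backward_closed (mul_args N n i r) Q := subterm_between_backward_closed _ t.
have [u [Hu Qu]] :
    exists u, In u (sg' q ++ sent q (ch1 ++ EMul q (mul_args N n i r) :: ch2)) /\ Q u.
  have Hfinal : held_elsewhere P P Q sf.
    exists p', t; split=> //; split; first lia.
    by split=> //; split; [apply: sum_tree_subterm Hsum Hleaf | apply: subterm_refl].
  have no_post p : ~ In (EMul p (mul_args N n i r)) post.
    by move=> H; apply: (no_after p); apply/in_or_app; right.
  case: (run_held_elsewhere HQ Hpost no_post Hfinal); last first.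
    by move=> [dst [u [Hsend _]]]; have /= := run_event_in_range Hpost Hsend; lia.
  move=> [q'' [u [Hq'' [_ [Hu Qu]]]]].
  case: (Nat.eq_dec q'' q) => [Eq | ne].
    by exists u; rewrite -Eq; split=> //; apply/in_or_app; left.
  have no_ch2 p : ~ In (EMul p (mul_args N n i r)) ch2.
    by move=> H; apply: (no_after p); apply/in_or_app; left.
  case: (@run_held_elsewhere _ _ _ _ _ q _ _ _ HQ Hch2 no_ch2); first by exists q'', u.
    move=> [q3 [u3 [Hq3 [ne3 [Hu3 [Qu3 _]]]]]]; case: absent.
    rewrite Es2 upd_neq // in Hu3; exists q3, u3.
    by split=> //; split; [lia | split].
  move=> [dst [u3 [Hsend Qu3]]]; exists u3; split=> //.
  by apply/in_or_app; right; apply: (@sent_in _ _ dst); apply/in_or_app; right; right.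
exists u; split=> //.
case: (sum_tree_output_key Hsum Hkeys (proj2 Qu)) => // u_atomic.
by have Eu := atomic_subterm (proj1 Qu) u_atomic; rewrite -Eu in u_atomic.
Qed.

End Execution.

(* A module, so that MathComp's notations for [nat] do not reach the statement of [corollary1]. *)
Module Counting.
Import ssrfun ssrbool eqtype ssrnat seq.

Section Projections.
Variable N : nat.
Implicit Types (S : seq (seq nat * nat)) (r : nat).

Definition slice S r : seq (seq nat) := [seq x.1 | x <- S & x.2 == r].

Definition proj S r k : seq nat := undup [seq nth 0 i k | i <- slice S r].

Definition tensor_keys S : seq (seq nat) := undup (unzip1 S).

(* [(k, i_k, r)] names the entry [A^(k)(i_k, r)] for [k <> n] and the output entry [B(i_n, r)]
   for [k = n]. *)
Definition factor_keys S : seq (nat * nat * nat) :=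
  undup [seq (k, nth 0 x.1 k, x.2) | x <- S, k <- iota 0 N].

Lemma uniq_slice S r : uniq S -> uniq (slice S r).
Proof.
move=> uS; rewrite map_inj_in_uniq ?filter_uniq // => -[i r1] [j r2].
by rewrite !mem_filter /= => /andP [/eqP -> _] /andP [/eqP -> _] /= ->.
Qed.

Lemma size_le_sum_slices S :
  uniq S -> size S <= sumn [seq size (slice S r) | r <- undup (unzip2 S)].
Proof.
move=> uS; rewrite -(size_map (fun i => (i, 0))) (_ : sumn _ = size (flatten
  [seq [seq (i, r) | i <- slice S r] | r <- undup (unzip2 S)])); last first.
  by rewrite size_flatten /shape -map_comp; congr sumn; apply: eq_map => r /=; rewrite size_map.
rewrite size_map; apply: uniq_leq_size => // -[i r] xS.
apply/flatten_mapP; exists r; first by rewrite mem_undup; apply: (map_f snd xS).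
by apply: (map_f (fun i => (i, r))); apply/mapP; exists (i, r); rewrite // mem_filter /= eqxx.
Qed.

Lemma size_slice_le_keys S r : uniq S -> size (slice S r) <= size (tensor_keys S).
Proof.
move=> uS; apply: uniq_leq_size; first exact: uniq_slice.
move=> i /mapP [x]; rewrite mem_filter => /andP [_ xS] ->.
by rewrite mem_undup; apply: map_f.
Qed.

Fixpoint cprod (Ps : seq (seq nat)) : seq (seq nat) :=
  if Ps is P :: Ps' then [seq j :: y | j <- P, y <- cprod Ps'] else [:: [::]].

Lemma size_cprod Ps : size (cprod Ps) = List.fold_right Nat.mul 1 [seq size P | P <- Ps].
Proof. by elim: Ps => //= P Ps IH; rewrite size_allpairs IH. Qed.

Lemma mem_cprod Ps i : size i = size Ps ->
  (forall k, k < size Ps -> nth 0 i k \in nth [::] Ps k) -> i \in cprod Ps.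
Proof.
elim: Ps i => [|P Ps IH] [|j i] //= [si] H.
apply/allpairsP; exists (j, i); split=> //; first exact: (H 0).
by apply: IH => // k; apply: (H k.+1).
Qed.

Lemma size_slice_le_prod_proj S r : (forall x, x \in S -> size x.1 = N) -> uniq S ->
  size (slice S r) <= List.fold_right Nat.mul 1 [seq size (proj S r k) | k <- iota 0 N].
Proof.
move=> sizeS uS.
rewrite (_ : [seq size _ | k <- _] = [seq size P | P <- [seq proj S r k | k <- iota 0 N]]);
  last by rewrite -map_comp.
rewrite -size_cprod; apply: uniq_leq_size; first exact: uniq_slice.
move=> i /mapP [x xSr ->]; move: (xSr); rewrite mem_filter => /andP [_ xS].
apply: mem_cprod => [|k]; first by rewrite size_map size_iota sizeS.
rewrite size_map size_iota => kN.
by rewrite (nth_map 0) ?size_iota // nth_iota // mem_undup; apply: map_f; apply: map_f.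
Qed.

Lemma sum_proj_le_factor_keys S (Rs : seq nat) : uniq Rs ->
  sumn [seq sumn [seq size (proj S r k) | k <- iota 0 N] | r <- Rs] <= size (factor_keys S).
Proof.
move=> uRs.
pose fiber r := [seq (k, j) | k <- iota 0 N, j <- proj S r k].
rewrite (_ : sumn _ = size [seq (kj.1, kj.2, r) | r <- Rs, kj <- fiber r]); last first.
  by rewrite size_allpairs_dep; congr sumn; apply: eq_map => r; rewrite size_allpairs_dep.
apply: uniq_leq_size.
  apply: allpairs_uniq_dep => // [r _ | [r1 [k1 j1]] [r2 [k2 j2]] _ _ /= [-> -> ->] //].
  apply: allpairs_uniq_dep => [||[k1 j1] [k2 j2] _ _ /= [-> ->]] //; first exact: iota_uniq.
  by move=> k _; apply: undup_uniq.
move=> _ /allpairsPdep [r [[k j] [_ /allpairsPdep [k' [j' [kN jP [-> ->]]]] ->]]] /=.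
move: jP; rewrite mem_undup => /mapP [i /mapP [x]]; rewrite mem_filter => /andP [/eqP <- xS] -> ->.
by rewrite mem_undup; apply/allpairsP; exists (x, k').
Qed.

End Projections.

Lemma sizeE (T : Type) (s : seq T) : size s = length s.
Proof. by elim: s => //= x s ->. Qed.

Lemma sumnE (s : seq nat) : sumn s = List.fold_right Nat.add 0 s.
Proof. by elim: s => //= a s ->. Qed.

Lemma INR_sumn_le (T : Type) (K : R) (f g : T -> nat) (s : seq T) :
  (0 <= K)%R -> (forall x, INR (f x) <= K * INR (g x))%R ->
  (INR (sumn [seq f x | x <- s]) <= K * INR (sumn [seq g x | x <- s]))%R.
Proof.
move=> K0 fg; elim: s => [|x s IH] /=; first by rewrite Rmult_0_r; apply: Rle_refl.
by rewrite !plus_INR Rmult_plus_distr_l; apply: Rplus_le_compat.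
Qed.

Lemma INR_leq (a b : nat) : a <= b -> (INR a <= INR b)%R.
Proof. by move/leP; apply: le_INR. Qed.

(* Per rank index [r], the slice of [S] is bounded both by the tensor entries and by the product
   of its [N] coordinate projections, whose sizes sum over [r] to at most the factor entries. *)
Lemma size_points_le N S : 0 < N -> uniq S -> (forall x, x \in S -> size x.1 = N) ->
  (INR (size S) <= Rpower (INR (size (tensor_keys S))) (1 - / INR N)
                     * INR (size (factor_keys N S)) / INR N)%R.
Proof.
move=> N_gt0 uS sizeS.
have N_gt0' : (0 < INR N)%R by apply: lt_0_INR; apply/ltP.
pose K := (Rpower (INR (size (tensor_keys S))) (1 - / INR N) / INR N)%R.
have K_ge0 : (0 <= K)%R by apply: Rle_mult_inv_pos => //; apply: Rlt_le; apply: Rpower_gt0.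
rewrite /Rdiv Rmult_assoc (Rmult_comm (INR _)) -Rmult_assoc -/(Rdiv _ _) -/K.
apply: Rle_trans (INR_leq (size_le_sum_slices uS)) _.
have projs := sum_proj_le_factor_keys N S (undup_uniq (unzip2 S)).
apply: Rle_trans (Rmult_le_compat_l _ _ _ K_ge0 (INR_leq projs)).
apply: INR_sumn_le => // r.
pose c := [seq size (proj S r k) | k <- iota 0 N].
have c_nil : c <> [::] by rewrite /c; case: (N) N_gt0.
have := card_le_Rpower_mean c_nil (elimT leP (size_slice_le_keys r uS))
  (elimT leP (size_slice_le_prod_proj r sizeS uS)).
rewrite -sizeE /c size_map size_iota -sumnE.
by move/Rle_trans; apply; apply: Req_le; rewrite /K; field; apply: Rgt_not_eq.
Qed.

Lemma map_f_In (T : Type) (U : eqType) (f : T -> U) x s : List.In x s -> f x \in map f s.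
Proof. by elim: s => //= y s IH [-> | /IH]; rewrite inE ?eqxx // => ->; rewrite orbT. Qed.

Lemma nthE (T : Type) (x0 : T) s k : nth x0 s k = List.nth k s x0.
Proof. by elim: s k => [|x s IH] [|k] //=. Qed.

Definition input_key (u : term) : option (seq nat + nat * nat * nat) :=
  match u with TX i => Some (inl i) | TA k j r => Some (inr (k, j, r)) | _ => None end.

Section Footprint.
Variables (N n : nat) (S : seq (seq nat * nat)).

Lemma factor_keysP f : f \in factor_keys N S ->
  exists2 x, x \in S & exists2 k, k < N & f = (k, nth 0 x.1 k, x.2).
Proof.
rewrite mem_undup => /allpairsP [[x k] [xS]]; rewrite mem_iota add0n => kN ->.
by exists x => //; exists k.
Qed.

Lemma input_footprint_le (L1 : seq term) :
  (forall x, x \in S ->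
     forall a, List.In a (mul_args N n x.1 x.2) -> atomic a -> List.In a L1) ->
  size (tensor_keys S) + size [seq f <- factor_keys N S | f.1.1 != n] <= size L1.
Proof.
move=> inputs.
pose K1 : seq (option (seq nat + nat * nat * nat)) :=
  [seq Some (inl i) | i <- tensor_keys S] ++
  [seq Some (inr f) | f <- [seq f <- factor_keys N S | f.1.1 != n]].
have -> : size (tensor_keys S) + size [seq f <- factor_keys N S | f.1.1 != n] = size K1.
  by rewrite size_cat !size_map.
rewrite -(size_map input_key L1); apply: uniq_leq_size.
  have uniq_fk : uniq (factor_keys N S) := undup_uniq _.
  rewrite cat_uniq !map_inj_uniq ?filter_uniq ?undup_uniq ?andbT //; try by move=> ? ? [].
  by apply/hasPn => _ /mapP [f _ ->]; apply/mapP => -[i _].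
move=> y; rewrite mem_cat => /orP [/mapP [i Hi ->] | /mapP [f Hf ->]].
  move: Hi; rewrite mem_undup => /mapP [x xS ->].
  by apply: (map_f_In input_key (x := TX x.1)); apply: (inputs x xS) => //; left.
move: Hf; rewrite mem_filter => /andP [kn /factor_keysP [x xS [k kN Ef]]].
rewrite Ef /= in kn *; rewrite nthE.
apply: (map_f_In input_key (x := TA k (List.nth k x.1 0) x.2)).
apply: (inputs x xS) => //; right; apply/List.in_map/List.filter_In; split.
  by apply/List.in_seq; move/ltP: kN; lia.
by case: (Nat.eqb_spec k n) => // Ekn; rewrite Ekn eqxx in kn.
Qed.

Lemma output_footprint_le (L2 : seq term) :
  (forall x, x \in S ->
     exists u, List.In u L2 /\ output_key n u = Some (n, List.nth n x.1 0, x.2)) ->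
  size [seq f <- factor_keys N S | f.1.1 == n] <= size L2.
Proof.
move=> outputs; rewrite -(size_map Some) -(size_map (output_key n) L2).
apply: uniq_leq_size; first by rewrite map_inj_uniq ?filter_uniq ?undup_uniq // => ? ? [].
move=> _ /mapP [f + ->]; rewrite mem_filter => /andP [/eqP kn /factor_keysP [x xS [k _ Ef]]].
have [u [Hu Eu]] := outputs x xS.
by rewrite Ef /= in kn; rewrite Ef kn nthE -Eu; apply: map_f_In.
Qed.

Lemma footprint_le (L1 L2 : seq term) :
  (forall x, x \in S ->
     forall a, List.In a (mul_args N n x.1 x.2) -> atomic a -> List.In a L1) ->
  (forall x, x \in S ->
     exists u, List.In u L2 /\ output_key n u = Some (n, List.nth n x.1 0, x.2)) ->
  size (tensor_keys S) + size (factor_keys N S) <= size L1 + size L2.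
Proof.
move=> /input_footprint_le inputs /output_footprint_le outputs.
rewrite -(count_predC (fun f => f.1.1 != n)) -!size_filter addnA leq_add //.
by rewrite (eq_filter (a2 := fun f => f.1.1 == n)) // => f /=; rewrite negbK.
Qed.

End Footprint.

Lemma InE (T : eqType) (x : T) (s : seq T) : List.In x s <-> x \in s.
Proof.
elim: s => [|y s IH] //=; rewrite inE; split.
- by case=> [-> | /IH ->]; rewrite ?eqxx ?orbT.
- by case/orP => [/eqP -> | /IH]; auto.
Qed.

Lemma NoDup_uniq (T : eqType) (s : seq T) : List.NoDup s -> uniq s.
Proof. by elim=> //= x {}s Hx _ ->; rewrite andbT; apply/negP => /InE. Qed.

Lemma size_le_sum_count (X : Type) (a : nat -> pred X) (Qs : seq nat) (s : seq X) :
  (forall x, List.In x s -> has (fun q => a q x) Qs) ->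
  size s <= sumn [seq count (a q) s | q <- Qs].
Proof.
elim: s => [|x s IH] Hs /=; first exact: leq0n.
rewrite (_ : sumn _ = sumn [seq a q x : nat | q <- Qs] + sumn [seq count (a q) s | q <- Qs]).
  rewrite sumn_count -add1n leq_add //; first by rewrite -has_count; apply: Hs; left.
  by apply: IH => y ys; apply: Hs; right.
by elim: Qs {Hs IH} => //= q Qs ->; rewrite addnACA.
Qed.

Lemma exists_ge_mean (f : nat -> nat) (Qs : seq nat) : Qs != [::] ->
  exists2 q, q \in Qs & sumn [seq f q | q <- Qs] <= size Qs * f q.
Proof.
elim: Qs => [|a [|b Qs] IH] //= _; first by exists a; rewrite ?mem_head // addn0 mul1n.
have [q' q'Qs Hq'] := IH isT.
case: (leqP (f a) (f q')) => Hfa.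
  by exists q'; [rewrite inE q'Qs orbT | rewrite mulSn; apply: leq_add].
exists a; first exact: mem_head.
rewrite mulSn; apply: leq_add => //; apply: leq_trans Hq' _.
by rewrite leq_mul2l ltnW ?orbT.
Qed.

(* [term] has no decidable equality, so membership of events is decided classically. *)
Definition asbool (A : Prop) : bool := if excluded_middle_informative A then true else false.

Lemma asboolP (A : Prop) : reflect A (asbool A).
Proof. by rewrite /asbool; case: excluded_middle_informative => H; constructor. Qed.

Section Segments.
Variables (N : nat) (dims : list nat) (rank n P M : nat).
Variables (s0 : state) (es : list event) (sf : state).
Hypotheses (HN : (2 <= N)%coq_nat) (Hlen : length dims = N) (Hn : (n < N)%coq_nat).
Hypothesis Hex : mttkrp_execution N dims rank n P M s0 es sf.

Definition points : seq (seq nat * nat) := [seq (i, r) | i <- idx_tuples dims, r <- iota 0 rank].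

Definition segment_points (q : nat) (L : seq event) : seq (seq nat * nat) :=
  [seq x <- points | asbool (List.In (EMul q (mul_args N n x.1 x.2)) L)].

Definition work (q : nat) (L : seq event) : nat := size (segment_points q L).

Lemma uniq_points : uniq points.
Proof.
apply: allpairs_uniq => [||[i r] [i' r'] _ _ /= [-> ->]] //; last exact: iota_uniq.
exact/NoDup_uniq/NoDup_idx_tuples.
Qed.

Lemma points_spec x : x \in points -> List.In x.1 (idx_tuples dims) /\ (x.2 < rank)%coq_nat.
Proof.
case/allpairsP => -[i r] [Hi Hr ->] /=; split; last by move: Hr; rewrite mem_iota add0n => /ltP.
exact/InE.
Qed.

Lemma size_points : size points = (List.fold_right Nat.mul 1 dims * rank)%coq_nat.
Proof. by rewrite size_allpairs size_iota sizeE length_idx_tuples. Qed.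

Definition segment_work_cap : R := (Rpower (INR (3 * M)) (1 - / INR N) * INR (3 * M) / INR N)%R.

Lemma segment_work_cap_ge0 : (0 <= segment_work_cap)%R.
Proof.
apply: Rle_mult_inv_pos; last by apply: lt_0_INR; lia.
by apply: Rmult_le_pos; [apply: Rlt_le; apply: Rpower_gt0 | apply: pos_INR].
Qed.

Lemma mem_segment_points q L x :
  x \in segment_points q L -> x \in points /\ List.In (EMul q (mul_args N n x.1 x.2)) L.
Proof. by rewrite mem_filter => /andP [/asboolP]. Qed.

Section Segment.
Variables (q : nat) (pre ch post : seq event) (sg sg' : state).
Hypotheses (Hq : (q < P)%coq_nat) (Ees : es = (pre ++ ch ++ post)%list).
Hypotheses (Hpre : run N P M s0 pre sg) (Hch : run N P M sg ch sg') (Hpost : run N P M sg' post sf).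

Lemma segment_footprint :
  (size (tensor_keys (segment_points q ch)) + size (factor_keys N (segment_points q ch))
    <= size (sg q) + size (sg' q) + comm q ch)%coq_nat.
Proof.
have inputs x : x \in segment_points q ch -> forall a, List.In a (mul_args N n x.1 x.2) ->
    atomic a -> List.In a (sg q ++ received q ch).
  by move=> /mem_segment_points [_ Hx]; apply: run_mul_operands Hch Hx.
have outputs x : x \in segment_points q ch -> exists u, List.In u (sg' q ++ sent q ch) /\
    output_key n u = Some (n, List.nth n x.1 0, x.2).
  move=> /mem_segment_points [/points_spec [Hi Hr] Hx].
  exact: (segment_output HN Hlen Hn Hex Hq Ees Hpre Hch Hpost Hi Hr Hx).
have := received_sent_le_comm q (L := ch)
  (fun a b t Ht => proj2 (proj2 (run_event_in_range Hch Ht))).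
move: (footprint_le inputs outputs) => /leP; rewrite !sizeE !length_app; lia.
Qed.

Lemma segment_work_le : (comm q ch <= M)%coq_nat -> (INR (work q ch) <= segment_work_cap)%R.
Proof.
move=> Hcomm; set S := segment_points q ch.
case: (S =P [::]) => [S_nil | S_ne]; first by rewrite /work -/S S_nil; exact: segment_work_cap_ge0.
have sizeS x : x \in S -> size x.1 = N.
  by move=> /mem_segment_points [/points_spec [Hi _] _]; rewrite sizeE (idx_tuples_length Hi).
have N_gt0 : 0 < N by apply/ltP; lia.
apply: Rle_trans (@size_points_le N S N_gt0 (filter_uniq _ uniq_points) sizeS) _.
have := segment_footprint; rewrite -/S.
have := run_bounded Hpre (proj1 Hex) Hq; have := run_bounded (run_app Hpre Hch) (proj1 Hex) Hq.
rewrite -!sizeE => Hsg' Hsg Hfoot.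
apply: Rpower_mean_monotone; try lia.
have /hasP [x0 x0S _] : has predT S by rewrite has_predT lt0n size_eq0; apply/eqP.
apply/ltP; rewrite -has_predT; apply/hasP; exists x0.1 => //.
by rewrite mem_undup; apply: map_f.
Qed.

End Segment.

Lemma work_cat q A B : work q (A ++ B)%list <= work q A + work q B.
Proof.
rewrite /work !size_filter -count_predUI; apply: leq_trans (leq_addr _ _).
apply: sub_count => x /asboolP.
by move=> /(List.in_app_or A B) [] Hx; apply/orP; [left | right]; apply/asboolP.
Qed.

(* Cutting [post] into segments in which [q] communicates [M] values, all but the last. *)
Lemma work_le_segments q pre post sg :
  (q < P)%coq_nat -> (0 < M)%coq_nat -> es = (pre ++ post)%list ->
  run N P M s0 pre sg -> run N P M sg post sf ->
  (INR (work q post) <= (INR (comm q post) / INR M + 1) * segment_work_cap)%R.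
Proof.
move=> Hq M_gt0; have [k] := ubnP (size post).
elim: k => // k IH in pre post sg *; rewrite ltnS => post_le Ees Hpre Hpost.
have M_gt0' : (0 < INR M)%R by apply: lt_0_INR.
have cap_ge0 := segment_work_cap_ge0.
have [ch [rest [Epost [Hch_comm Hrest]]]] := split_at_comm q M post; subst post.
have [sg' [Hch Hrest_run]] := run_app_inv Hpost.
have Hseg : (INR (work q ch) <= segment_work_cap)%R.
  by apply: (segment_work_le Hq _ Hpre Hch Hrest_run) => //; rewrite Ees.
case: Hrest => [Erest | Ech].
  subst rest; rewrite List.app_nil_r.
  have : (0 <= INR (comm q ch) / INR M)%R by apply: Rle_mult_inv_pos => //; apply: pos_INR.
  nra.
have ch_ne : ch <> [::] by move=> Ech0; rewrite Ech0 /comm /= in Ech; lia.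
have Hrest : (INR (work q rest) <= (INR (comm q rest) / INR M + 1) * segment_work_cap)%R.
  apply: (IH (pre ++ ch)%list rest sg' _ _ (run_app Hpre Hch) Hrest_run).
    by move: post_le; rewrite !sizeE List.length_app; case: (ch) ch_ne => //= *; lia.
  by rewrite Ees List.app_assoc.
have Hsplit := INR_leq (work_cat q ch rest); rewrite plus_INR in Hsplit.
rewrite comm_app plus_INR Ech.
have -> : ((INR M + INR (comm q rest)) / INR M + 1 = 1 + (INR (comm q rest) / INR M + 1))%R.
  by field; apply: Rgt_not_eq.
lra.
Qed.

Hypothesis points_gt0 : (0 < List.fold_right Nat.mul 1 dims * rank)%coq_nat.

Lemma memory_gt0 : (0 < M)%coq_nat.
Proof.
have : 0 < size points by rewrite size_points; apply/ltP.
case Eps : points => [|[i r] ps] // _.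
have [Hi Hr] : List.In i (idx_tuples dims) /\ (r < rank)%coq_nat.
  by apply: (@points_spec (i, r)); rewrite Eps mem_head.
have [q [_ Hmul]] := mul_performed Hex Hi Hr.
exact: run_mul_memory_pos (proj1 (proj2 (proj2 Hex))) Hmul.
Qed.

Lemma busiest_processor : exists q, (q < P)%coq_nat /\ size points <= P * work q es.
Proof.
have covered : size points <= sumn [seq work q es | q <- iota 0 P].
  rewrite (eq_map (fun q => size_filter _ points)).
  apply: size_le_sum_count => x /InE /points_spec [Hi Hr].
  have [q [Hq Hmul]] := mul_performed Hex Hi Hr.
  by apply/hasP; exists q; [rewrite mem_iota; apply/andP; split=> //; apply/ltP | apply/asboolP].
have P_ne : iota 0 P != [::].
  by move: covered points_gt0; rewrite size_points; case: (P) => //=; lia.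
have [q] := exists_ge_mean (fun q => work q es) P_ne.
rewrite mem_iota size_iota => /andP [_ /ltP Hq] Hmean.
by exists q; split=> //; apply: leq_trans Hmean.
Qed.

End Segments.

End Counting.

Import Counting.
Unset Implicit Arguments.

Theorem corollary1 (N : nat) (dims : list nat) (R n P M : nat)
    (HN : 2 <= N) (Hlen : length dims = N) (Hdims : forall d, In d dims -> 1 <= d)
    (HR : 1 <= R) (Hn : n < N)
    (s0 : state) (es : list event) (sf : state) :
  mttkrp_execution N dims R n P M s0 es sf ->
  exists p, p < P /\
    (INR (comm p es) >=
       / Rpower 3 (2 - / INR N) * (INR N * INR (fold_right Nat.mul 1%nat dims) * INR R)
         / (INR P * Rpower (INR M) (1 - / INR N)) - INR M)%R.
Proof.
move=> Hex.
have points_gt0 : 0 < fold_right Nat.mul 1 dims * R by have := fold_mul_pos Hdims; nia.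
have [q [Hq busy]] := busiest_processor HN Hlen Hn Hex points_gt0.
have M_gt0 := memory_gt0 Hex points_gt0.
exists q; split=> //.
rewrite Rmult_assoc -mult_INR.
apply: (comm_lower_bound_arith (W := INR (work N dims R n q es))).
- by apply: lt_0_INR; lia.
- by apply: lt_0_INR.
- by apply: lt_0_INR; lia.
- by rewrite -mult_INR -size_points; apply: INR_leq.
- have -> : (3 * INR M = INR (3 * M))%R by rewrite mult_INR /=; ring.
  exact: (work_le_segments HN Hlen Hn Hex Hq M_gt0 (pre := []) eq_refl (run_nil _ _ _ _)
    (proj1 (proj2 (proj2 Hex)))).
Qed.
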